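(* Let $M\in\mathbb{R}^{m\times n}$ with $m\le n$ and $\operatorname{rank}(M)=r$. Let $\{p_i\}_{i=1}^n$ be a probability distribution on $[n]$ with $p_i>0$ for all $i$, and let $p_{\min}=\min_{i\in[n]}p_i$. Let $\delta\in(0,1)$. Suppose that Algorithm MC-NUS (described in the context) is run on $M$ with target rank $r$, $d$ sampled columns, sampling distribution $\{p_i\}$, and $s$ sampled entries per remaining column, where $$d\ \ge\ \frac{7\mu(r)\,r\ln(2r/\delta)}{n\,p_{\min}},\qquad s\ \ge\ 7\mu(r)\,r\ln(2rn/\delta).$$ Then with probability at least $1-\delta$ (over the random sampling of the algorithm), the output satisfies $\hat M=M$, i.e. the algorithm recovers $M$ exactly.
   Context: Notation: for a matrix $B$, $B_{(i)}$ is its $i$-th row and $B^{(j)}$ its $j$-th column; for a (multi)set $\mathcal{O}$ of row indices, $\mathbf{x}_{\mathcal{O}}$ is the vector of entries of $\mathbf{x}$ indexed by $\mathcal{O}$ and $B_{\mathcal{O}}$ is the matrix of rows of $B$ indexed by $\mathcal{O}$ (with repetitions if $\mathcal{O}$ has repeated indices). Write $M=[\mathbf{m}_1,\dots,\mathbf{m}_n]$. Algorithm MC-NUS (inputs: target rank $r>0$, integers $d\ge r$, $s>0$, distribution $\{p_i\}_{i=1}^n$ with $p_i>0$): (1) For $j=1,\dots,d$, independently sample $i_j\in[n]$ with $\Pr[i_j=i]=p_i$; set $\hat{\mathbf{m}}_{i_j}=\mathbf{m}_{i_j}$ (these columns are fully observed) and $A^{(j)}=\mathbf{m}_{i_j}/\sqrt{d\,p_{i_j}}$,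 giving $A\in\mathbb{R}^{m\times d}$. (2) Set $\hat r=\min(r,\operatorname{rank}(A))$ and let $\hat U\in\mathbb{R}^{m\times\hat r}$ consist of the top-$\hat r$ left singular vectors of $A$. (3) For each remaining column $\mathbf{m}_i$ (not among the sampled ones), sample a multiset $\mathcal{O}_i$ of $s$ indices uniformly at random from $[m]$ with replacement, observe $\mathbf{m}_{i,\mathcal{O}_i}$, and set $\hat{\mathbf{m}}_i=\hat U(\hat U_{\mathcal{O}_i}^T\hat U_{\mathcal{O}_i})^{-1}\hat U_{\mathcal{O}_i}^T\mathbf{m}_{i,\mathcal{O}_i}$. Output $\hat M=[\hat{\mathbf{m}}_1,\dots,\hat{\mathbf{m}}_n]$. Incoherence: let $\bar U\in\mathbb{R}^{m\times r}$, $\bar V\in\mathbb{R}^{n\times r}$ be the matrices of top-$r$ left and right singular vectors of $M$; $\mu(r)=\max\left(\max_{i\in[m]}\frac{m}{r}\|\bar U_{(i)}\|_2^2,\ \max_{i\in[n]}\frac{n}{r}\|\bar V_{(i)}\|_2^2\right)$. *)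

From HB Require Import structures.
From mathcomp Require Import all_boot all_order all_algebra.
From mathcomp Require Import all_classical all_reals all_analysis.
Set Implicit Arguments. Unset Strict Implicit. Unset Printing Implicit Defensive.
Import Order.TTheory GRing.Theory Num.Theory.
Local Open Scope ring_scope.

Section Defs.
Variable R : realType.

(* U (m x k) consists of top-k left singular vectors of A (m x d):
   orthonormal columns, eigenvectors of A A^T (left singular vectors) with
   eigenvalues lam (= squared singular values) in nonincreasing order, and
   these are the top k: every vector orthogonal to the columns of U has
   Rayleigh quotient for A A^T at most each lam a. *)
Definition top_left_sv (m d k : nat) (A : 'M[R]_(m, d)) (U : 'M[R]_(m, k)) : Prop :=
  U^T *m U = 1%:M /\
  exists lam : 'I_k -> R,
    (forall a b : 'I_k, (a <= b)%N -> lam b <= lam a) /\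
    A *m A^T *m U = U *m diag_mx (\row_a lam a) /\
    (forall x : 'cV[R]_m, U^T *m x = 0 ->
       forall a : 'I_k, (x^T *m (A *m A^T) *m x) 0 0 <= lam a * (x^T *m x) 0 0).

Definition rownorm2 (m k : nat) (U : 'M[R]_(m, k)) (i : 'I_m) : R :=
  \sum_(l < k) U i l ^+ 2.

Definition incoherence (m n r : nat) (Ub : 'M[R]_(m, r)) (Vb : 'M[R]_(n, r)) : R :=
  Num.max (\big[Num.max/0]_(i < m) (m%:R / r%:R * rownorm2 Ub i))
          (\big[Num.max/0]_(j < n) (n%:R / r%:R * rownorm2 Vb j)).

(* p_min = min_i p_i (p is a probability vector, so all p_i <= 1) *)
Definition pmin (n : nat) (p : 'I_n -> R) : R := \big[Num.min/1]_(i < n) p i.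

(* Sample space of MC-NUS: the d column indices i_1..i_d, and for every
   column i a sequence O_i of s row indices (only used for the remaining,
   non-sampled columns; sampling it for all columns does not change the
   distribution of the algorithm's run). *)
Definition outcome (m n d s : nat) : finType :=
  ({ffun 'I_d -> 'I_n} * {ffun 'I_n -> {ffun 'I_s -> 'I_m}})%type.

Definition weight (m n d s : nat) (p : 'I_n -> R) (w : outcome m n d s) : R :=
  (\prod_(j < d) p (w.1 j)) * (m%:R^-1) ^+ (n * s).

Definition Prob (m n d s : nat) (p : 'I_n -> R) (E : outcome m n d s -> Prop) : R :=
  \sum_(w : outcome m n d s) (if `[< E w >] then weight p w else 0).

Definition sampledA (m n d : nat) (M : 'M[R]_(m, n)) (p : 'I_n -> R)
  (idx : 'I_d -> 'I_n) : 'M[R]_(m, d) :=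
  \matrix_(a < m, j < d) (M a (idx j) / Num.sqrt (d%:R * p (idx j))).

Definition rows_sel (m k s : nat) (U : 'M[R]_(m, k)) (O : 'I_s -> 'I_m) : 'M[R]_(s, k) :=
  \matrix_(t < s, l < k) U (O t) l.

Definition estimate (m n k s : nat) (M : 'M[R]_(m, n)) (U : 'M[R]_(m, k))
  (O : 'I_s -> 'I_m) (i : 'I_n) : 'cV[R]_m :=
  let UO := rows_sel U O in
  U *m invmx (UO^T *m UO) *m UO^T *m (\col_(t < s) M (O t) i).

(* Exact recovery event for outcome w: for every admissible choice of U-hat
   (top-rhat left singular vectors of A, rhat = min(r, rank A)), every
   remaining column i has U_O^T U_O invertible and its estimate equals m_i.
   (Sampled columns are copied exactly, so they are always recovered.) *)
Definition mcnus_recovers (m n d s r : nat) (M : 'M[R]_(m, n)) (p : 'I_n -> R)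
  (w : outcome m n d s) : Prop :=
  let A := sampledA M p (fun j => w.1 j) in
  forall U : 'M[R]_(m, minn r (\rank A)),
    top_left_sv A U ->
    forall i : 'I_n, (forall j : 'I_d, w.1 j != i) ->
      let UO := rows_sel U (fun t => w.2 i t) in
      (UO^T *m UO) \in unitmx /\ estimate M U (fun t => w.2 i t) i = col i M.

End Defs.

From HB Require Import structures.
From mathcomp Require Import all_boot all_order all_algebra.
From mathcomp Require Import all_classical all_reals all_analysis.
From mathcomp Require Import lra zify ring.
Import Order.TTheory GRing.Theory Num.Theory.
Local Open Scope ring_scope.
Set Implicit Arguments. Unset Strict Implicit. Unset Printing Implicit Defensive.

(* MC-NUS recovers M as soon as (i) the sampled rows of the right singular
   vectors Vb span R^r, so that A has the column space of M and so does U-hat,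
   and (ii) for each remaining column the sampled rows of the left singular
   vectors Ub span R^r, so that U-hat_O has full column rank and least squares
   is exact.  Both events are controlled by one sampling fact: if the rows v_i
   of a matrix with orthonormal columns are drawn i.i.d. with
   P(i) >= q |v_i|^2, then a draw escapes a subspace W with probability at
   least (r - dim W) q, because the |v_i|^2 with v_i in W sum to at most
   dim W while all of them sum to r.  Hence the expected rank deficiency after
   d draws is at most r (1 - q)^d <= r exp(-q d).  Incoherence gives
   q = n p_min / (mu r) for the columns and q = 1 / (mu r) for the rows; a
   union bound over the n columns finishes the proof. *)

Section Gram.
Variable R : realType.

Lemma sqnorm_rV_ge0 k (w : 'rV[R]_k) : 0 <= (w *m w^T) 0 0.
Proof. by rewrite mxE; apply: sumr_ge0 => l _; rewrite mxE -expr2 sqr_ge0. Qed.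

Lemma sqnorm_rV_eq0 k (w : 'rV[R]_k) : (w *m w^T) 0 0 = 0 -> w = 0.
Proof.
rewrite mxE => w0; apply/rowP => l; rewrite mxE; apply/eqP; rewrite -sqrf_eq0.
have w2_ge0 i : true -> 0 <= w 0 i * w^T i 0 by rewrite mxE -expr2 sqr_ge0.
by have := psumr_eq0P w2_ge0 w0 (i := l) isT; rewrite mxE -expr2 => ->.
Qed.

Lemma rownorm2E m k (U : 'M[R]_(m, k)) i :
  rownorm2 U i = (row i U *m (row i U)^T) 0 0.
Proof. by rewrite /rownorm2 mxE; apply: eq_bigr => l _; rewrite !mxE expr2. Qed.

Lemma rownorm2_ge0 m k (U : 'M[R]_(m, k)) i : 0 <= rownorm2 U i.
Proof. by apply: sumr_ge0 => l _; apply: sqr_ge0. Qed.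

Lemma gram_unitmx s k (X : 'M[R]_(s, k)) : \rank X = k -> X^T *m X \in unitmx.
Proof.
move=> rX; rewrite -row_free_unit -kermx_eq0; apply/eqP/row_matrixP => i.
rewrite row0; set v := row i _.
have vXX : v *m (X^T *m X) = 0 by rewrite /v -row_mul mulmx_ker row0.
have vX : v *m X^T = 0.
  apply: sqnorm_rV_eq0; rewrite trmx_mul trmxK !mulmxA -(mulmxA v) vXX.
  by rewrite mul0mx mxE.
have /row_fullP [B XB] : row_full X by rewrite /row_full rX.
apply: trmx_inj; rewrite -[v^T]mul1mx -XB -mulmxA -[X in X *m v^T]trmxK.
by rewrite -trmx_mul vX !trmx0 mulmx0.
Qed.

Lemma rank_orthonormal m k (U : 'M[R]_(m, k)) : U^T *m U = 1%:M -> \rank U = k.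
Proof.
move=> UU; apply/eqP; rewrite eqn_leq rank_leq_col /=.
by rewrite -{1}(mxrank1 R k) -UU mxrankM_maxr.
Qed.

Lemma eigvecs_sub m d k (A : 'M[R]_(m, d)) (U : 'M[R]_(m, k)) (lam : 'I_k -> R) :
  A *m A^T *m U = U *m diag_mx (\row_a lam a) -> (forall a, lam a != 0) ->
  (U^T <= A^T)%MS.
Proof.
move=> AU lam0.
have -> : U = A *m (A^T *m U *m diag_mx (\row_a (lam a)^-1)).
  rewrite !mulmxA AU; apply/matrixP => i j.
  by rewrite !mul_mx_diag !mxE mulfK.
by rewrite trmx_mul submxMl.
Qed.

Lemma rayleigh_null_sub m d k (A : 'M[R]_(m, d)) (U : 'M[R]_(m, k)) :
  (forall x : 'cV[R]_m, U^T *m x = 0 -> (x^T *m (A *m A^T) *m x) 0 0 <= 0) ->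
  (A^T <= U^T)%MS.
Proof.
move=> hR; rewrite submxE; apply/eqP/matrixP => i j.
set x := col j (cokermx U^T).
have Ux : U^T *m x = 0 by rewrite /x colE mulmxA mulmx_coker mul0mx.
have xA : x^T *m A = 0.
  apply: sqnorm_rV_eq0; apply/eqP; rewrite eq_le sqnorm_rV_ge0 andbT.
  by have := hR x Ux; rewrite trmx_mul trmxK !mulmxA.
have Ax : A^T *m x = 0 by rewrite -[A^T *m x]trmxK trmx_mul trmxK xA trmx0.
by have := congr1 (fun X : 'cV[R]_d => X i 0) Ax; rewrite /x colE mulmxA -colE !mxE.
Qed.

Lemma top_left_sv_eqmx m d k (A : 'M[R]_(m, d)) (U : 'M[R]_(m, k)) :
  top_left_sv A U -> k = \rank A -> (U^T :=: A^T)%MS.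
Proof.
case=> UU [lam [_ [AU rayleigh]]] rA.
have rUA : \rank U^T = \rank A^T by rewrite !mxrank_tr rank_orthonormal.
have [lam0 | /forallPn [a /negPn /eqP lam_a]] := boolP [forall a, lam a != 0].
  apply/eqmxP; rewrite -(mxrank_leqif_eq _).2 ?rUA //.
  by apply: eigvecs_sub AU _ => a; apply: (forallP lam0).
apply/eqmx_sym/eqmxP; rewrite -(mxrank_leqif_eq _).2 ?rUA //.
by apply: rayleigh_null_sub => x Ux; have := rayleigh x Ux a; rewrite lam_a mul0r.
Qed.

End Gram.

Lemma exists_orthogonal_projector (R : realType) r (W : 'M[R]_r) :
  exists Q : 'M[R]_r, [/\ Q *m Q^T = Q, \tr Q = (\rank W)%:R &
                         forall u : 'rV_r, (u <= W)%MS -> u *m Q = u].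
Proof.
move: (row_base W) (eq_row_base W) => B BW; set G := B *m B^T.
have GU : G \in unitmx by rewrite /G -{1}(trmxK B) gram_unitmx // mxrank_tr BW.
have GT : G^T = G by rewrite /G trmx_mul trmxK.
exists (B^T *m invmx G *m B); split.
- rewrite !trmx_mul trmxK trmx_inv GT !mulmxA -(mulmxA _ B) -/G.
  by rewrite -(mulmxA _ G) mulmxV // mulmx1.
- by rewrite mxtrace_mulC mulmxA -/G mulmxV // mxtrace1.
- move=> u; rewrite -BW => /submxP [c ->].
  by rewrite !mulmxA -(mulmxA c B) -/G -(mulmxA _ G) mulmxV // mulmx1.
Qed.

Section OrthonormalColumns.
Variables (R : realType) (N r : nat) (V : 'M[R]_(N, r)).
Hypothesis VV : V^T *m V = 1%:M.

Lemma sum_rownorm2 : \sum_i rownorm2 V i = r%:R.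
Proof.
rewrite /rownorm2 exchange_big /= -(mxtrace1 R r) -VV.
by apply: eq_bigr => l _; rewrite mxE; apply: eq_bigr => i _; rewrite mxE expr2.
Qed.

Lemma sum_quad_rows (Q : 'M[R]_r) : \sum_i (row i V *m Q *m (row i V)^T) 0 0 = \tr Q.
Proof.
transitivity (\tr (V *m Q *m V^T)).
  by apply: eq_bigr => i _; rewrite tr_row colE mulmxA -colE -!row_mul !mxE.
by rewrite mxtrace_mulC mulmxA VV mul1mx.
Qed.

Lemma sum_rownorm2_sub_le_rank (W : 'M[R]_r) :
  \sum_(i | (row i V <= W)%MS) rownorm2 V i <= (\rank W)%:R.
Proof.
have [Q [QQ <- WQ]] := exists_orthogonal_projector W.
rewrite -sum_quad_rows [leRHS](bigID (fun i => (row i V <= W)%MS)) /= -[leLHS]addr0.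
apply: lerD; first by apply: ler_sum => i /WQ VQ; rewrite VQ rownorm2E.
apply: sumr_ge0 => i _.
by rewrite -QQ !mulmxA -(mulmxA (row i V *m Q)) -trmx_mul sqnorm_rV_ge0.
Qed.

Lemma mass_outside_ge (p : 'I_N -> R) (q : R) :
  0 <= q -> (forall i, q * rownorm2 V i <= p i) ->
  forall W : 'M[R]_r, (r - \rank W)%:R * q <= \sum_(i | ~~ (row i V <= W)%MS) p i.
Proof.
move=> q0 pq W.
have := sum_rownorm2; rewrite (bigID (fun i => (row i V <= W)%MS)) /=.
have := sum_rownorm2_sub_le_rank W => inW tot.
apply: (le_trans (y := q * \sum_(i | ~~ (row i V <= W)%MS) rownorm2 V i)).
  by rewrite mulrC ler_wpM2l // natrB ?rank_leq_col //; lra.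
by rewrite mulr_sumr; apply: ler_sum.
Qed.

End OrthonormalColumns.

Lemma one_minus_expn_le_inv (R : realType) (q K : R) d :
  0 <= q <= 1 -> 0 < K -> ln K <= q * d%:R -> (1 - q) ^+ d <= K^-1.
Proof.
move=> /andP [q0 q1] K0 lnK_le.
apply: (le_trans (y := expR (- q) ^+ d)).
  apply: lerXn2r; rewrite ?nnegrE ?subr_ge0 ?expR_ge0 //.
  by have := expR_ge1Dx (- q).
by rewrite -expRM_natr -[K]lnK ?posrE // -expRN ler_expR; lra.
Qed.

Definition ffun_cons (T : finType) d (t : T) (g : {ffun 'I_d -> T}) :
  {ffun 'I_d.+1 -> T} := [ffun j => if unlift ord0 j is Some j' then g j' else t].

Lemma big_ffun_cons (T : finType) (A : Type) (idx : A) (op : A -> A -> A) d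
  (t : T) (g : {ffun 'I_d -> T}) (F : T -> A) :
  \big[op/idx]_(j < d.+1) F (ffun_cons t g j) = op (F t) (\big[op/idx]_(j < d) F (g j)).
Proof.
rewrite big_ord_recl ffunE unlift_none.
by congr op; apply: eq_bigr => j _; rewrite ffunE liftK.
Qed.

Lemma sum_ffun_cons (V : nmodType) (T : finType) d (F : {ffun 'I_d.+1 -> T} -> V) :
  \sum_f F f = \sum_(t : T) \sum_(g : {ffun 'I_d -> T}) F (ffun_cons t g).
Proof.
rewrite pair_big /= (reindex (fun x : T * {ffun 'I_d -> T} => ffun_cons x.1 x.2)) //.
apply: onW_bij.
exists (fun f : {ffun 'I_d.+1 -> T} => (f ord0, [ffun j => f (lift ord0 j)])).
  case=> t g /=; rewrite ffunE unlift_none; congr pair.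
  by apply/ffunP => j; rewrite !ffunE liftK.
move=> f /=; apply/ffunP => j; rewrite ffunE.
by case: unliftP => [j' ->|->]; rewrite ?ffunE.
Qed.

Lemma rank_deficit_addsmx (F : fieldType) m r (W : 'M[F]_(m, r)) (v : 'rV[F]_r) :
  (r - \rank (W + <<v>>)%MS + ~~ (v <= W)%MS <= r - \rank W)%N.
Proof.
have WWv := addsmxSl W <<v>>%MS.
have le_rk := mxrankS WWv; have := rank_leq_col (W + <<v>>)%MS.
case: (boolP (v <= W)%MS) => vW /=; first by rewrite addn0 leq_sub2l.
have : (\rank W < \rank (W + <<v>>)%MS)%N.
  rewrite ltn_neqAle le_rk andbT (mxrank_leqif_eq WWv).2 WWv /=.
  by rewrite addsmx_sub submx_refl genmxE.
lia.
Qed.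

Definition rows_deficient (R : realType) k N r (V : 'M[R]_(N, r)) (f : 'I_k -> 'I_N) :=
  (\rank (\sum_(j < k) <<row (f j) V>>)%MS < r)%N.

Section RowSampling.
Variables (R : realType) (N r : nat) (V : 'M[R]_(N, r)) (p : 'I_N -> R) (q : R).
Hypotheses (r_gt0 : (0 < r)%N) (VV : V^T *m V = 1%:M).
Hypotheses (p_ge0 : forall i, 0 <= p i) (p_sum1 : \sum_i p i = 1).
Hypotheses (q_ge0 : 0 <= q) (p_dominates : forall i, q * rownorm2 V i <= p i).

Lemma dominating_le1 : q <= 1.
Proof.
have := mass_outside_ge VV q_ge0 p_dominates 0; rewrite mxrank0 subn0.
have : \sum_(i | ~~ (row i V <= (0 : 'M[R]_r))%MS) p i <= 1.
  rewrite -p_sum1 [leRHS](bigID (fun i => ~~ (row i V <= (0 : 'M[R]_r))%MS)) /= lerDl.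
  exact: sumr_ge0.
have : 1 <= r%:R :> R by rewrite ler1n.
nra.
Qed.

Lemma rank_deficient_prob_le d (W : 'M[R]_r) :
  \sum_(f : {ffun 'I_d -> 'I_N}) (\prod_j p (f j)) *
     (if (\rank (W + \sum_(j < d) <<row (f j) V>>)%MS < r)%N then 1 else 0)
  <= (r - \rank W)%:R * (1 - q) ^+ d.
Proof.
elim: d W => [|d IH] W.
  apply: (le_trans (y := \sum_(f : {ffun 'I_0 -> 'I_N}) (r - \rank W)%:R)).
    apply: ler_sum => f _; rewrite !big_ord0 mul1r addsmx0_id.
    by case: ifP => // rW; rewrite ler1n subn_gt0.
  by rewrite sumr_const card_ffun !card_ord expn0 expr0 mulr1.
rewrite sum_ffun_cons.
under eq_bigr => t _ do under eq_bigr => g _ do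
  rewrite big_ffun_cons (@big_ffun_cons _ _ _ _ _ _ _ (fun x => <<row x V>>%MS))
          addsmxA -mulrA.
under eq_bigr => t _ do rewrite -mulr_sumr.
apply: (le_trans (ler_sum _ (fun t _ => ler_wpM2l (p_ge0 t) (IH (W + <<row t V>>)%MS)))).
have c_ge0 : 0 <= (1 - q) ^+ d by rewrite exprn_ge0 // subr_ge0 dominating_le1.
have step t : p t * (r - \rank (W + <<row t V>>)%MS)%:R
    <= p t * (r - \rank W)%:R - (if ~~ (row t V <= W)%MS then p t else 0).
  have := rank_deficit_addsmx W (row t V); have := p_ge0 t.
  case: (~~ _) => /=; rewrite -(ler_nat R) natrD => ? ?; nra.
apply: (le_trans (y := \sum_t (p t * (r - \rank W)%:R -
          (if ~~ (row t V <= W)%MS then p t else 0)) * (1 - q) ^+ d)).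
  by apply: ler_sum => t _; rewrite mulrA ler_wpM2r.
rewrite -mulr_suml sumrB -mulr_suml p_sum1 mul1r -big_mkcond /= exprS.
have := mass_outside_ge VV q_ge0 p_dominates W; nra.
Qed.

Lemma rows_deficient_prob_le d (K : R) : 0 < K -> ln K <= q * d%:R ->
  \sum_(f : {ffun 'I_d -> 'I_N}) (\prod_j p (f j)) * (if rows_deficient V f then 1 else 0)
  <= r%:R / K.
Proof.
move=> K0 lnK_le; have := rank_deficient_prob_le d 0; rewrite mxrank0 subn0.
under eq_bigr do rewrite adds0mx_id; move/le_trans; apply.
apply: ler_wpM2l => //; apply: one_minus_expn_le_inv => //.
by rewrite q_ge0 dominating_le1.
Qed.

End RowSampling.

Section Recovery.
Variables (R : realType) (m n r : nat) (M : 'M[R]_(m, n)).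
Hypothesis rkM : \rank M = r.

Lemma sampledA_trE d (p : 'I_n -> R) (idx : 'I_d -> 'I_n) j :
  row j (sampledA M p idx)^T = (Num.sqrt (d%:R * p (idx j)))^-1 *: row (idx j) M^T.
Proof. by apply/rowP => l; rewrite !mxE mulrC. Qed.

Lemma sampledA_eqmx d (p : 'I_n -> R) (idx : 'I_d -> 'I_n) (Vb : 'M[R]_(n, r)) :
  (forall i, 0 < p i) -> top_left_sv M^T Vb -> ~~ rows_deficient Vb idx ->
  ((sampledA M p idx)^T :=: M^T)%MS.
Proof.
move=> p_gt0 svV; rewrite /rows_deficient -leqNgt => spanV.
set A := sampledA M p idx.
have AM : (A^T <= M^T)%MS.
  by apply/row_subP => j; rewrite sampledA_trE scalemx_sub ?row_sub.
have VbM := top_left_sv_eqmx svV (esym (etrans (mxrank_tr M) rkM)).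
have /submxP [E VbE] : (Vb^T <= M)%MS by rewrite VbM trmxK.
apply/eqmxP; rewrite -(mxrank_leqif_eq AM).2 eqn_leq mxrankS //=.
rewrite [\rank M^T]mxrank_tr rkM.
apply: (leq_trans spanV); apply: (leq_trans _ (mxrankM_maxl A^T E^T)).
apply/mxrankS/sumsmx_subP => j _; rewrite genmxE.
have sqrt_gt0 : 0 < Num.sqrt (d%:R * p (idx j)).
  by rewrite sqrtr_gt0 mulr_gt0 // ltr0n (leq_ltn_trans (leq0n j)).
have -> : row (idx j) Vb = Num.sqrt (d%:R * p (idx j)) *: row j A^T *m E^T.
  rewrite sampledA_trE scalerA mulfV ?gt_eqF // scale1r -row_mul.
  by rewrite -[Vb]trmxK VbE trmx_mul.
by rewrite -scalemxAl scalemx_sub // submxMr // row_sub.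
Qed.

Lemma rows_sel_mul k l s (U : 'M[R]_(m, k)) (B : 'M[R]_(k, l)) (O : 'I_s -> 'I_m) :
  rows_sel (U *m B) O = rows_sel U O *m B.
Proof. by apply/matrixP => t j; rewrite !mxE; apply: eq_bigr => a _; rewrite !mxE. Qed.

Lemma rows_sel_rank_ge k s (U : 'M[R]_(m, k)) (Ub : 'M[R]_(m, r)) (O : 'I_s -> 'I_m) :
  (Ub^T <= U^T)%MS -> ~~ rows_deficient Ub O -> (r <= \rank (rows_sel U O))%N.
Proof.
case/submxP => D UbD; rewrite /rows_deficient -leqNgt => spanU.
have UbU : Ub = U *m D^T by rewrite -[Ub]trmxK UbD trmx_mul trmxK.
apply: (leq_trans spanU); apply: (leq_trans _ (mxrankM_maxl (rows_sel U O) D^T)).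
rewrite -rows_sel_mul -UbU; apply/mxrankS/sumsmx_subP => t _; rewrite genmxE.
have -> : row (O t) Ub = row t (rows_sel Ub O) by apply/rowP => l; rewrite !mxE.
exact: row_sub.
Qed.

Lemma estimate_exact k s (U : 'M[R]_(m, k)) (O : 'I_s -> 'I_m) i :
  (M^T <= U^T)%MS -> (rows_sel U O)^T *m rows_sel U O \in unitmx ->
  estimate M U O i = col i M.
Proof.
case/submxP => E ME; have -> : M = U *m E^T by rewrite -[M]trmxK ME trmx_mul trmxK.
rewrite /estimate; set UO := rows_sel U O => UO_unit.
have -> : \col_t (U *m E^T) (O t) i = UO *m col i E^T.
  by apply/colP => t; rewrite !mxE; apply: eq_bigr => a _; rewrite !mxE.
rewrite -!mulmxA (mulmxA UO^T) (mulmxA (invmx _)) mulVmx // mul1mx.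
by rewrite [RHS]colE -mulmxA -colE.
Qed.

Lemma mcnus_recovers_of_spanning d s (p : 'I_n -> R) (Ub : 'M[R]_(m, r))
  (Vb : 'M[R]_(n, r)) (w : outcome m n d s) :
  (forall i, 0 < p i) -> top_left_sv M Ub -> top_left_sv M^T Vb ->
  ~~ rows_deficient Vb w.1 -> (forall i, ~~ rows_deficient Ub (w.2 i)) ->
  mcnus_recovers r M p w.
Proof.
move=> p_gt0 svU svV spanV spanU; rewrite /mcnus_recovers /= => U svA i _.
set A := sampledA M p (fun j => w.1 j).
have AM : (A^T :=: M^T)%MS := sampledA_eqmx p_gt0 svV spanV.
have rkA : \rank A = r by rewrite -mxrank_tr AM mxrank_tr.
have UA : (U^T :=: A^T)%MS by apply: top_left_sv_eqmx svA _; rewrite rkA minnn.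
have UM := eqmx_trans UA AM.
have UbM : (Ub^T :=: M^T)%MS := top_left_sv_eqmx svU (esym rkM).
set UO := rows_sel U (fun t => w.2 i t).
have UO_unit : UO^T *m UO \in unitmx.
  apply: gram_unitmx; apply/eqP; rewrite eqn_leq rank_leq_col /= {1}rkA minnn.
  by apply: rows_sel_rank_ge (spanU i); rewrite UbM UM.
by split=> //; apply: estimate_exact; rewrite ?UM.
Qed.

End Recovery.

Section ProductWeight.
Variables (R : realType) (m n d s : nat) (p : 'I_n -> R).
Hypotheses (m_gt0 : (0 < m)%N) (p_ge0 : forall i, 0 <= p i) (p_sum1 : \sum_i p i = 1).

Let u : R := m%:R^-1 ^+ s.

Lemma sum_prod_p : \sum_(f : {ffun 'I_d -> 'I_n}) \prod_j p (f j) = 1.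
Proof. by rewrite -(bigA_distr_bigA (fun _ k => p k)) /= p_sum1 big1. Qed.

Lemma sum_uniform : \sum_(O : {ffun 'I_s -> 'I_m}) u = 1.
Proof.
rewrite sumr_const card_ffun !card_ord -mulr_natr natrX -exprMn mulVf ?expr1n //.
by rewrite pnatr_eq0 -lt0n.
Qed.

Lemma weightE (w : outcome m n d s) : weight p w = (\prod_j p (w.1 j)) * \prod_(i < n) u.
Proof. by rewrite /weight prodr_const card_ord -exprM mulnC. Qed.

Lemma sum_weight_fst (g : {ffun 'I_d -> 'I_n} -> R) :
  \sum_(w : outcome m n d s) weight p w * g w.1
  = \sum_(f : {ffun 'I_d -> 'I_n}) (\prod_j p (f j)) * g f.
Proof.
rewrite -(pair_bigA _ (fun f w2 => weight p (f, w2) * g f)) /=.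
apply: eq_bigr => f _; under eq_bigr do rewrite weightE /= mulrAC.
rewrite -big_distrr /= -(bigA_distr_bigA (fun (_ : 'I_n) (_ : {ffun 'I_s -> 'I_m}) => u)).
by rewrite [X in _ * X]big1 ?mulr1 // => i _; apply: sum_uniform.
Qed.

Lemma sum_weight_snd (i : 'I_n) (g : {ffun 'I_s -> 'I_m} -> R) :
  \sum_(w : outcome m n d s) weight p w * g (w.2 i)
  = \sum_(O : {ffun 'I_s -> 'I_m}) u * g O.
Proof.
rewrite -(pair_bigA _ (fun f w2 => weight p (f, w2) * g (w2 i))) /=.
under eq_bigr do under eq_bigr do rewrite weightE /= -mulrA.
under eq_bigr do rewrite -big_distrr /=.
rewrite -big_distrl /= sum_prod_p mul1r.
pose F (i' : 'I_n) (O : {ffun 'I_s -> 'I_m}) := if i' == i then u * g O else u.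
have FE (w2 : {ffun 'I_n -> {ffun 'I_s -> 'I_m}}) :
    (\prod_(i' < n) u) * g (w2 i) = \prod_i' F i' (w2 i').
  rewrite (bigD1 i) // [RHS](bigD1 i) //= /F eqxx mulrAC; congr (_ * _).
  by apply: eq_bigr => i' /negPf ->.
rewrite (eq_bigr _ (fun w2 _ => FE w2)) -(bigA_distr_bigA F) /= (bigD1 i) //= /F eqxx.
by rewrite [X in _ * X]big1 ?mulr1 // => i' /negPf ->; apply: sum_uniform.
Qed.

Lemma Prob_ge_union_bound (E : outcome m n d s -> Prop)
  (b1 : pred {ffun 'I_d -> 'I_n}) (b2 : pred {ffun 'I_s -> 'I_m}) :
  (forall w : outcome m n d s, ~~ b1 w.1 -> (forall i, ~~ b2 (w.2 i)) -> E w) ->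
  1 - (\sum_(f : {ffun 'I_d -> 'I_n}) (\prod_j p (f j)) * (if b1 f then 1 else 0)
       + n%:R * \sum_(O : {ffun 'I_s -> 'I_m}) u * (if b2 O then 1 else 0))
  <= Prob p E.
Proof.
move=> b12E.
pose i1 f : R := if b1 f then 1 else 0; pose i2 O : R := if b2 O then 1 else 0.
have i1_ge0 f : 0 <= i1 f by rewrite /i1; case: ifP.
have i2_ge0 O : 0 <= i2 O by rewrite /i2; case: ifP.
have ind_le (w : outcome m n d s) :
    1 - i1 w.1 - \sum_i i2 (w.2 i) <= if `[< E w >] then 1 else 0.
  have := i1_ge0 w.1; have : 0 <= \sum_i i2 (w.2 i) by apply: sumr_ge0.
  case: asboolP => Ew; first lra.
  have [b1w | nb1w] := boolP (b1 w.1); first by rewrite /i1 b1w; lra.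
  have [i b2i | nb2w] := pickP (fun i => b2 (w.2 i)); last first.
    by case: Ew; apply: b12E nb1w _ => i; rewrite nb2w.
  have i2i : i2 (w.2 i) = 1 by rewrite /i2 b2i.
  rewrite (bigD1 i) //= i2i.
  have : 0 <= \sum_(j | j != i) i2 (w.2 j) by apply: sumr_ge0.
  lra.
have -> : Prob p E = \sum_w weight p w * (if `[< E w >] then 1 else 0).
  by apply: eq_bigr => w _; case: ifP; rewrite ?mulr1 ?mulr0.
apply: (le_trans _ (ler_sum _ (fun w _ => ler_wpM2l _ (ind_le w)))); last first.
  by move=> w; rewrite weightE mulr_ge0 ?prodr_ge0 ?exprn_ge0 ?invr_ge0.
have total : \sum_(w : outcome m n d s) weight p w * 1 = 1.
  rewrite (sum_weight_fst (fun=> 1)).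
  by under eq_bigr do rewrite mulr1; apply: sum_prod_p.
have -> : \sum_(w : outcome m n d s) weight p w * (1 - i1 w.1 - \sum_i i2 (w.2 i))
    = \sum_(w : outcome m n d s) weight p w * 1
      - \sum_(w : outcome m n d s) weight p w * i1 w.1
      - \sum_(i < n) \sum_(w : outcome m n d s) weight p w * i2 (w.2 i).
  by rewrite exchange_big -!sumrB; apply: eq_bigr => w _; rewrite !mulrBr mulr_sumr.
rewrite total sum_weight_fst (eq_bigr _ (fun i _ => sum_weight_snd i i2)).
by rewrite sumr_const card_ord -[in leRHS]mulr_natl opprD addrA.
Qed.

End ProductWeight.

Section Incoherence.
Variables (R : realType) (m n r : nat) (Ub : 'M[R]_(m, r)) (Vb : 'M[R]_(n, r)).
Hypothesis r_gt0 : (0 < r)%N.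

Lemma rownorm2_l_le_incoherence i : m%:R * rownorm2 Ub i <= incoherence Ub Vb * r%:R.
Proof.
rewrite -ler_pdivrMr ?ltr0n // mulrAC /incoherence le_max.
by rewrite (le_bigmax _ (fun i => m%:R / r%:R * rownorm2 Ub i) i).
Qed.

Lemma rownorm2_r_le_incoherence i : n%:R * rownorm2 Vb i <= incoherence Ub Vb * r%:R.
Proof.
rewrite -ler_pdivrMr ?ltr0n // mulrAC /incoherence le_max.
by rewrite (le_bigmax _ (fun i => n%:R / r%:R * rownorm2 Vb i) i) orbT.
Qed.

Lemma incoherence_ge1 : (0 < m)%N -> Ub^T *m Ub = 1%:M -> 1 <= incoherence Ub Vb.
Proof.
move=> m_gt0 UU.
have : \sum_i m%:R * rownorm2 Ub i <= \sum_(i < m) incoherence Ub Vb * r%:R.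
  by apply: ler_sum => i _; apply: rownorm2_l_le_incoherence.
rewrite -mulr_sumr sum_rownorm2 // sumr_const card_ord -[_ *+ m]mulr_natl.
have : 0 < m%:R * r%:R :> R by rewrite mulr_gt0 ?ltr0n.
nra.
Qed.

End Incoherence.

Lemma pmin_gt0 (R : realType) n (p : 'I_n -> R) : (forall i, 0 < p i) -> 0 < pmin p.
Proof.
by move=> p_gt0; rewrite /pmin; elim/big_ind: _ => // x y x0 y0; rewrite lt_min x0 y0.
Qed.

Section FailureBounds.
Variables (R : realType) (m n r : nat) (Ub : 'M[R]_(m, r)) (Vb : 'M[R]_(n, r)).
Variables (p : 'I_n -> R) (delta : R).
Hypotheses (m_gt0 : (0 < m)%N) (n_gt0 : (0 < n)%N) (r_gt0 : (0 < r)%N).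
Hypotheses (UU : Ub^T *m Ub = 1%:M) (VV : Vb^T *m Vb = 1%:M).
Hypotheses (p_gt0 : forall i, 0 < p i) (p_sum1 : \sum_i p i = 1).
Hypotheses (delta_gt0 : 0 < delta) (delta_lt1 : delta < 1).

Lemma column_failure_le d :
  7 * incoherence Ub Vb * r%:R * ln (2 * r%:R / delta) / (n%:R * pmin p) <= d%:R ->
  \sum_(f : {ffun 'I_d -> 'I_n}) (\prod_j p (f j)) * (if rows_deficient Vb f then 1 else 0)
  <= delta / 2.
Proof.
set mu := incoherence Ub Vb; set L := ln _ => d_ge.
have mur_gt0 : 0 < mu * r%:R.
  by rewrite mulr_gt0 ?ltr0n // (lt_le_trans ltr01) ?incoherence_ge1.
have pm_gt0 := pmin_gt0 p_gt0.
have npm_gt0 : 0 < n%:R * pmin p by rewrite mulr_gt0 ?ltr0n.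
have L_ge0 : 0 <= L.
  apply: ln_ge0; rewrite ler_pdivlMr // mul1r (le_trans (ltW delta_lt1)) //.
  by rewrite -natrM ler1n muln_gt0 r_gt0.
pose q := n%:R * pmin p / (mu * r%:R).
have q_ge0 : 0 <= q by rewrite divr_ge0 ?ltW.
have dom i : q * rownorm2 Vb i <= p i.
  have := rownorm2_r_le_incoherence Ub Vb r_gt0 i; have := bigmin_le 1 i p.
  have := rownorm2_ge0 Vb i; have := p_gt0 i.
  rewrite /q mulrAC ler_pdivrMr // -/mu -/(pmin p); nra.
have lnK : L <= q * d%:R.
  rewrite /q mulrAC ler_pdivlMr //; move: d_ge; rewrite ler_pdivrMr //; nra.
have K_gt0 : 0 < 2 * r%:R / delta by rewrite divr_gt0 ?mulr_gt0 ?ltr0n.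
apply: le_trans (rows_deficient_prob_le r_gt0 VV (fun i => ltW (p_gt0 i)) p_sum1 q_ge0 dom
  K_gt0 lnK) _.
suff -> : r%:R / (2 * r%:R / delta) = delta / 2 by [].
by field; rewrite !gt_eqF ?ltr0n.
Qed.

Lemma row_failure_le s :
  7 * incoherence Ub Vb * r%:R * ln (2 * r%:R * n%:R / delta) <= s%:R ->
  n%:R * \sum_(O : {ffun 'I_s -> 'I_m})
           m%:R^-1 ^+ s * (if rows_deficient Ub O then 1 else 0)
  <= delta / 2.
Proof.
set mu := incoherence Ub Vb; set L := ln _ => s_ge.
have mur_gt0 : 0 < mu * r%:R.
  by rewrite mulr_gt0 ?ltr0n // (lt_le_trans ltr01) ?incoherence_ge1.
have L_ge0 : 0 <= L.
  apply: ln_ge0; rewrite ler_pdivlMr // mul1r (le_trans (ltW delta_lt1)) //.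
  by rewrite -!natrM ler1n !muln_gt0 r_gt0 n_gt0.
pose q := (mu * r%:R)^-1.
have q_ge0 : 0 <= q by rewrite invr_ge0 ltW.
pose unif := fun _ : 'I_m => (m%:R^-1 : R).
have unif_ge0 l : 0 <= unif l by rewrite invr_ge0 ler0n.
have unif_sum1 : \sum_l unif l = 1.
  by rewrite sumr_const card_ord -[_ *+ m]mulr_natr mulVf // pnatr_eq0 -lt0n.
have dom l : q * rownorm2 Ub l <= unif l.
  have := rownorm2_l_le_incoherence Ub Vb r_gt0 l.
  by move=> ?; rewrite /q /unif ler_pdivrMl // ler_pdivlMr ?ltr0n // mulrC.
have lnK : L <= q * s%:R by rewrite /q mulrC ler_pdivlMr //; nra.
have K_gt0 : 0 < 2 * r%:R * n%:R / delta by rewrite divr_gt0 ?mulr_gt0 ?ltr0n.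
have := rows_deficient_prob_le r_gt0 UU unif_ge0 unif_sum1 q_ge0 dom K_gt0 lnK.
under eq_bigr do rewrite prodr_const card_ord.
move=> /(ler_wpM2l (ler0n _ n)) /le_trans; apply.
suff -> : n%:R * (r%:R / (2 * r%:R * n%:R / delta)) = delta / 2 by [].
by field; rewrite !gt_eqF ?ltr0n.
Qed.

End FailureBounds.

Theorem theorem1 (R : realType) (m n r d s : nat) (M : 'M[R]_(m, n))
  (p : 'I_n -> R) (delta : R)
  (Ub : 'M[R]_(m, r)) (Vb : 'M[R]_(n, r)) :
  (m <= n)%N -> (0 < r)%N -> \rank M = r ->
  (forall i, 0 < p i) -> \sum_(i < n) p i = 1 ->
  0 < delta < 1 ->
  top_left_sv M Ub -> top_left_sv M^T Vb ->
  7 * incoherence Ub Vb * r%:R * ln (2 * r%:R / delta) / (n%:R * pmin p) <= d%:R ->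
  7 * incoherence Ub Vb * r%:R * ln (2 * r%:R * n%:R / delta) <= s%:R ->
  1 - delta <= Prob (d := d) (s := s) p (mcnus_recovers r M p).
Proof.
move=> le_mn r_gt0 rkM p_gt0 p_sum1 /andP [delta_gt0 delta_lt1] svU svV d_ge s_ge.
have m_gt0 : (0 < m)%N by rewrite (leq_trans r_gt0) // -rkM rank_leq_row.
have n_gt0 := leq_trans m_gt0 le_mn.
have UU := proj1 svU; have VV := proj1 svV.
have col_fail :=
  column_failure_le m_gt0 n_gt0 r_gt0 UU VV p_gt0 p_sum1 delta_gt0 delta_lt1 d_ge.
have row_fail := row_failure_le m_gt0 n_gt0 r_gt0 UU delta_gt0 delta_lt1 s_ge.
apply: le_trans (Prob_ge_union_bound m_gt0 (fun i => ltW (p_gt0 i)) p_sum1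
  (b1 := fun f => rows_deficient Vb f) (b2 := fun O => rows_deficient Ub O)
  (fun w => mcnus_recovers_of_spanning rkM p_gt0 svU svV)).
lra.
Qed.
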